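(* For $k\ge 0$ let $p_k(x)=\sqrt{(k+1)/\pi}\,x^k$ (the Bergman orthonormal polynomials of the unit disk), and for $n\ge 0$ define, for $x\in\mathbb{R}$, $$K_n(x,x)=\sum_{k=0}^np_k(x)^2,\quad K_n^{(0,1)}(x,x)=\sum_{k=0}^np_k(x)p_k'(x),\quad K_n^{(1,1)}(x,x)=\sum_{k=0}^np_k'(x)^2,$$ $$\mathcal K_n(x)=\frac{\sqrt{K_n^{(1,1)}(x,x)K_n(x,x)-(K_n^{(0,1)}(x,x))^2}}{K_n(x,x)}.$$ Then $$\lim_{n\to\infty}\mathcal K_n(x)=\begin{cases}\dfrac{\sqrt2}{1-x^2}, & |x|<1,\\[1ex] \dfrac{1}{x^2-1}, & |x|>1,\end{cases}$$ where the convergence holds locally uniformly on $(-1,1)$ and on $\{x\in\mathbb{R}:|x|>1\}$; moreover $$\mathcal K_n(\pm1)=\frac13\sqrt{\frac{n(n+3)}{2}}.$$ *)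

From Stdlib Require Import Reals.
From Coquelicot Require Import Coquelicot.
Open Scope R_scope.

Definition p (k : nat) (x : R) : R := sqrt (INR (k + 1) / PI) * x ^ k.

Definition dp (k : nat) (x : R) : R := Derive (p k) x.

Definition Kn (n : nat) (x : R) : R := sum_f_R0 (fun k => p k x ^ 2) n.
Definition Kn01 (n : nat) (x : R) : R := sum_f_R0 (fun k => p k x * dp k x) n.
Definition Kn11 (n : nat) (x : R) : R := sum_f_R0 (fun k => dp k x ^ 2) n.

Definition calK (n : nat) (x : R) : R :=
  sqrt (Kn11 n x * Kn n x - (Kn01 n x) ^ 2) / Kn n x.

Definition Klim (x : R) : R :=
  if Rlt_dec (Rabs x) 1 then sqrt 2 / (1 - x ^ 2) else 1 / (x ^ 2 - 1).

Definition unif_cv_on (f : nat -> R -> R) (g : R -> R) (S : R -> Prop) : Prop :=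
  forall eps, 0 < eps -> exists N : nat, forall n x, (N <= n)%nat -> S x ->
    Rabs (f n x - g x) < eps.

Definition loc_unif_cv_on (f : nat -> R -> R) (g : R -> R) (U : R -> Prop) : Prop :=
  forall a b, (forall x, a <= x <= b -> U x) ->
    unif_cv_on f g (fun x => a <= x <= b).

(* With t = x^2 the three kernels are pi^-1 times A(t) = sum (k+1) t^k, x P(t) and Q(t),
   so calK_n(x) = sqrt (Q A - t P^2) / A.  Summing these arithmetico-geometric series gives
   A (1-t)^2 = 1 - t^n a,  P (1-t)^3 = 2 - t^n b,  Q (1-t)^4 = 2 + 4t - t^n c,
   with tails a, b, c polynomial in t and of degree at most 3 in n.
   For t < 1 the tails are O(n^3 t^n), so (Q A - t P^2)(1-t)^6 -> 2 while A (1-t)^2 -> 1,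
   and calK_n -> sqrt 2 / (1-t) geometrically fast.
   For t > 1 the tails dominate:
   (Q A - t P^2)(1-t)^6 - (A (1-t)^2)^2 = 1 + t^n (4t(b-a) - c) + t^(2n) (c a - t b^2 - a^2),
   and the last coefficient collapses to t^2 (1 - (n+1)(t^2-1)) = O(n), whereas
   (A (1-t)^2)^2 is of order n^2 t^(2n); hence calK_n -> 1/(t-1) with error O(1/n).
   At t = 1 the three sums are explicit polynomials in n.  All error bounds are uniform for
   t in a compact subset of [0,1) or of (1,oo), which gives the local uniformity. *)
From Stdlib Require Import Reals Lra Lia.
From Coquelicot Require Import Coquelicot.
Open Scope R_scope.

(** * Reduction to three power sums *)

Definition Asum (n : nat) (t : R) : R := sum_f_R0 (fun k => INR (k + 1) * t ^ k) n.
Definition Psum (n : nat) (t : R) : R :=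
  sum_f_R0 (fun k => INR k * INR (k + 1) * t ^ (k - 1)) n.
Definition Qsum (n : nat) (t : R) : R :=
  sum_f_R0 (fun k => INR k ^ 2 * INR (k + 1) * t ^ (k - 1)) n.

Definition kappa (n : nat) (t : R) : R :=
  sqrt (Qsum n t * Asum n t - t * Psum n t ^ 2) / Asum n t.

Lemma dp_eq k x : dp k x = sqrt (INR (k + 1) / PI) * (INR k * x ^ (k - 1)).
Proof.
  unfold dp, p. apply is_derive_unique. auto_derive; auto.
  destruct k; simpl; [ring|]. rewrite Nat.sub_0_r. ring.
Qed.

Lemma p_coef_sqr k : sqrt (INR (k + 1) / PI) ^ 2 = INR (k + 1) / PI.
Proof.
  apply pow2_sqrt, Rdiv_le_0_compat; [apply pos_INR | apply PI_RGT_0].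
Qed.

Lemma p_sqr k x : p k x ^ 2 = / PI * (INR (k + 1) * (x ^ 2) ^ k).
Proof.
  unfold p. rewrite Rpow_mult_distr, p_coef_sqr, <- !pow_mult, Nat.mul_comm.
  unfold Rdiv. ring.
Qed.

Lemma p_mul_dp k x :
  p k x * dp k x = / PI * (x * (INR k * INR (k + 1) * (x ^ 2) ^ (k - 1))).
Proof.
  rewrite dp_eq. unfold p.
  transitivity (sqrt (INR (k + 1) / PI) ^ 2 * INR k * (x ^ k * x ^ (k - 1))); [ring|].
  rewrite p_coef_sqr. destruct k as [|j]; [simpl; ring|].
  replace (S j - 1)%nat with j by lia.
  rewrite <- pow_mult, <- pow_add. replace (S j + j)%nat with (S (2 * j)) by lia.
  simpl. unfold Rdiv. ring.
Qed.

Lemma dp_sqr k x : dp k x ^ 2 = / PI * (INR k ^ 2 * INR (k + 1) * (x ^ 2) ^ (k - 1)).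
Proof.
  rewrite dp_eq, !Rpow_mult_distr, p_coef_sqr, <- !pow_mult, (Nat.mul_comm 2).
  unfold Rdiv. ring.
Qed.

Lemma sum_f_R0_scal c f n : sum_f_R0 (fun k => c * f k) n = c * sum_f_R0 f n.
Proof. induction n as [|n IH]; simpl; [|rewrite IH]; ring. Qed.

Lemma Kn_Asum n x : Kn n x = / PI * Asum n (x ^ 2).
Proof. unfold Kn, Asum. rewrite <- sum_f_R0_scal. apply sum_eq. intros; apply p_sqr. Qed.

Lemma Kn01_Psum n x : Kn01 n x = / PI * (x * Psum n (x ^ 2)).
Proof.
  unfold Kn01, Psum. rewrite <- !sum_f_R0_scal. apply sum_eq. intros; apply p_mul_dp.
Qed.

Lemma Kn11_Qsum n x : Kn11 n x = / PI * Qsum n (x ^ 2).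
Proof. unfold Kn11, Qsum. rewrite <- sum_f_R0_scal. apply sum_eq. intros; apply dp_sqr. Qed.

Lemma Asum_ge_1 n t : 0 <= t -> 1 <= Asum n t.
Proof.
  intros Ht. induction n as [|n IH]; unfold Asum in *; [simpl; lra|].
  rewrite tech5.
  assert (0 <= INR (S n + 1) * t ^ S n)
    by (apply Rmult_le_pos; [apply pos_INR | apply pow_le; lra]).
  lra.
Qed.

Lemma calK_kappa n x : calK n x = kappa n (x ^ 2).
Proof.
  unfold calK, kappa. rewrite Kn_Asum, Kn01_Psum, Kn11_Qsum.
  assert (HPI := PI_RGT_0).
  assert (HA := Asum_ge_1 n (x ^ 2) (pow2_ge_0 x)).
  replace (/ PI * Qsum n (x ^ 2) * (/ PI * Asum n (x ^ 2)) - (/ PI * (x * Psum n (x ^ 2))) ^ 2)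
    with ((/ PI) ^ 2 * (Qsum n (x ^ 2) * Asum n (x ^ 2) - x ^ 2 * Psum n (x ^ 2) ^ 2))
    by ring.
  rewrite sqrt_mult_alt, sqrt_pow2 by (apply pow2_ge_0 || (left; apply Rinv_0_lt_compat; lra)).
  field. lra.
Qed.

(** * Closed forms *)

Definition Atail (m t : R) : R := t * (m + 2 - (m + 1) * t).
Definition Ptail (m t : R) : R :=
  (m + 1) * (m + 2) - 2 * m * (m + 2) * t + m * (m + 1) * t ^ 2.
Definition Qtail (m t : R) : R :=
  (m + 1) ^ 2 * (m + 2) + (4 - 4 * m - 9 * m ^ 2 - 3 * m ^ 3) * t
  + (- m + 6 * m ^ 2 + 3 * m ^ 3) * t ^ 2 - m ^ 2 * (m + 1) * t ^ 3.

Lemma Asum_closed n t : Asum n t * (1 - t) ^ 2 = 1 - t ^ n * Atail (INR n) t.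
Proof.
  induction n as [|n IH]; unfold Asum, Atail in *; [simpl; ring|].
  rewrite tech5, Rmult_plus_distr_r, IH, plus_INR, !S_INR. simpl. ring.
Qed.

Lemma Psum_closed n t : Psum n t * (1 - t) ^ 3 = 2 - t ^ n * Ptail (INR n) t.
Proof.
  induction n as [|n IH]; unfold Psum, Ptail in *; [simpl; ring|].
  rewrite tech5, Rmult_plus_distr_r, IH, plus_INR, !S_INR, Nat.sub_succ, Nat.sub_0_r.
  simpl. ring.
Qed.

Lemma Qsum_closed n t : Qsum n t * (1 - t) ^ 4 = 2 + 4 * t - t ^ n * Qtail (INR n) t.
Proof.
  induction n as [|n IH]; unfold Qsum, Qtail in *; [simpl; ring|].
  rewrite tech5, Rmult_plus_distr_r, IH, plus_INR, !S_INR, Nat.sub_succ, Nat.sub_0_r.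
  simpl. ring.
Qed.

Lemma discriminant_closed n t :
  (Qsum n t * Asum n t - t * Psum n t ^ 2) * (1 - t) ^ 6
  = (2 + 4 * t - t ^ n * Qtail (INR n) t) * (1 - t ^ n * Atail (INR n) t)
    - t * (2 - t ^ n * Ptail (INR n) t) ^ 2.
Proof. rewrite <- Asum_closed, <- Psum_closed, <- Qsum_closed. ring. Qed.

Lemma tails_relation m t :
  Qtail m t * Atail m t - t * Ptail m t ^ 2 - Atail m t ^ 2
  = t ^ 2 * (1 - (m + 1) * (t ^ 2 - 1)).
Proof. unfold Qtail, Ptail, Atail. ring. Qed.

Lemma discriminant_inner_remainder n t : t <> 1 ->
  (Qsum n t * Asum n t - t * Psum n t ^ 2 - 2 * (Asum n t / (1 - t)) ^ 2) * (1 - t) ^ 6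
  = t ^ n * (2 * Atail (INR n) t
             + (4 * t * (Ptail (INR n) t - Atail (INR n) t) - Qtail (INR n) t))
    + (t ^ n) ^ 2 * (Qtail (INR n) t * Atail (INR n) t - t * Ptail (INR n) t ^ 2
                     - 2 * Atail (INR n) t ^ 2).
Proof.
  intros Ht.
  replace ((Qsum n t * Asum n t - t * Psum n t ^ 2 - 2 * (Asum n t / (1 - t)) ^ 2) * (1 - t) ^ 6)
    with ((Qsum n t * Asum n t - t * Psum n t ^ 2) * (1 - t) ^ 6
          - 2 * (Asum n t * (1 - t) ^ 2) ^ 2) by (field; lra).
  rewrite discriminant_closed, Asum_closed. ring.
Qed.

Lemma discriminant_outer_remainder n t : t <> 1 ->
  (Qsum n t * Asum n t - t * Psum n t ^ 2 - (Asum n t / (t - 1)) ^ 2) * (1 - t) ^ 6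
  = 1 + t ^ n * (4 * t * (Ptail (INR n) t - Atail (INR n) t) - Qtail (INR n) t)
    + (t ^ n) ^ 2 * (t ^ 2 * (1 - (INR n + 1) * (t ^ 2 - 1))).
Proof.
  intros Ht.
  replace ((Qsum n t * Asum n t - t * Psum n t ^ 2 - (Asum n t / (t - 1)) ^ 2) * (1 - t) ^ 6)
    with ((Qsum n t * Asum n t - t * Psum n t ^ 2) * (1 - t) ^ 6
          - (Asum n t * (1 - t) ^ 2) ^ 2) by (field; lra).
  rewrite discriminant_closed, Asum_closed, <- tails_relation. ring.
Qed.

Lemma Asum_at_1 n : Asum n 1 = (INR n + 1) * (INR n + 2) / 2.
Proof.
  induction n as [|n IH]; unfold Asum in *; [simpl; field|].
  rewrite tech5, IH, pow1, plus_INR, S_INR. simpl. field.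
Qed.

Lemma Psum_at_1 n : Psum n 1 = INR n * (INR n + 1) * (INR n + 2) / 3.
Proof.
  induction n as [|n IH]; unfold Psum in *; [simpl; field|].
  rewrite tech5, IH, pow1, plus_INR, S_INR. simpl. field.
Qed.

Lemma Qsum_at_1 n : Qsum n 1 = INR n * (INR n + 1) * (INR n + 2) * (3 * INR n + 1) / 12.
Proof.
  induction n as [|n IH]; unfold Qsum in *; [simpl; field|].
  rewrite tech5, IH, pow1, plus_INR, S_INR. simpl. field.
Qed.

Lemma kappa_at_1 n : kappa n 1 = / 3 * sqrt (INR n * (INR n + 3) / 2).
Proof.
  unfold kappa. rewrite Asum_at_1, Psum_at_1, Qsum_at_1.
  assert (Hn := pos_INR n).
  set (A := (INR n + 1) * (INR n + 2) / 2).
  assert (HA : 0 < A) by (unfold A; nra).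
  replace (INR n * (INR n + 1) * (INR n + 2) * (3 * INR n + 1) / 12 * A
           - 1 * (INR n * (INR n + 1) * (INR n + 2) / 3) ^ 2)
    with ((A / 3) ^ 2 * (INR n * (INR n + 3) / 2)) by (unfold A; field).
  rewrite sqrt_mult_alt, sqrt_pow2 by (apply pow2_ge_0 || lra).
  field. lra.
Qed.

(** * Error estimates *)

Lemma Rdiv_le_compat a b c d : 0 <= a <= b -> 0 < d <= c -> a / c <= b / d.
Proof.
  intros Hab Hcd. unfold Rdiv.
  apply Rmult_le_compat; try lra.
  - left. apply Rinv_0_lt_compat. lra.
  - apply Rinv_le_contravar; lra.
Qed.

Lemma Rabs_sqrt_sub_le a b : 0 < b -> Rabs (sqrt a - sqrt b) <= Rabs (a - b) / sqrt b.
Proof.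
  intros Hb. assert (Hsb : 0 < sqrt b) by (apply sqrt_lt_R0; lra).
  assert (Hbb : sqrt b * sqrt b = b) by (apply sqrt_sqrt; lra).
  destruct (Rle_lt_dec a 0) as [Ha|Ha].
  - rewrite sqrt_neg_0, Rminus_0_l, Rabs_Ropp, Rabs_pos_eq, Rabs_left1 by lra.
    apply Rmult_le_reg_r with (sqrt b); [lra|].
    unfold Rdiv. rewrite Rmult_assoc, Rinv_l by lra. lra.
  - assert (Hsa : 0 < sqrt a) by (apply sqrt_lt_R0; lra).
    replace (sqrt a - sqrt b) with ((a - b) / (sqrt a + sqrt b)).
    2:{ rewrite <- (sqrt_sqrt a) at 1 by lra. rewrite <- Hbb at 1. field. lra. }
    unfold Rdiv. rewrite Rabs_mult, Rabs_inv, (Rabs_pos_eq (sqrt a + sqrt b)) by lra.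
    apply Rmult_le_compat_l; [apply Rabs_pos | apply Rinv_le_contravar; lra].
Qed.

Lemma Rabs_sqrt_div_sub_le D A K : 0 < A -> 0 < K ->
  Rabs (sqrt D / A - K) <= Rabs (D - K ^ 2 * A ^ 2) / (K * A ^ 2).
Proof.
  intros HA HK. assert (HKA : 0 < K * A) by nra.
  replace (sqrt D / A - K) with ((sqrt D - sqrt ((K * A) ^ 2)) / A)
    by (rewrite sqrt_pow2 by lra; field; lra).
  unfold Rdiv at 1. rewrite Rabs_mult, Rabs_inv, (Rabs_pos_eq A) by lra.
  eapply Rle_trans.
  - apply Rmult_le_compat_r; [left; apply Rinv_0_lt_compat; lra|].
    apply Rabs_sqrt_sub_le. nra.
  - rewrite sqrt_pow2, Rpow_mult_distr by lra. right. field. lra.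
Qed.

Lemma Rabs_cubic_le c0 c1 c2 c3 t M : 0 <= t <= M -> 1 <= M ->
  Rabs (c0 + c1 * t + c2 * t ^ 2 + c3 * t ^ 3)
  <= (Rabs c0 + Rabs c1 + Rabs c2 + Rabs c3) * M ^ 3.
Proof.
  intros Ht HM.
  assert (Hmono : forall c i, (i <= 3)%nat -> Rabs (c * t ^ i) <= Rabs c * M ^ 3).
  { intros c i Hi. rewrite Rabs_mult, <- RPow_abs, (Rabs_pos_eq t) by lra.
    apply Rmult_le_compat_l; [apply Rabs_pos|].
    apply Rle_trans with (M ^ i); [apply pow_incr; lra | apply Rle_pow; [lra | lia]]. }
  specialize (Hmono c0 0%nat) as H0. specialize (Hmono c1 1%nat) as H1.
  specialize (Hmono c2 2%nat) as H2. specialize (Hmono c3 3%nat) as H3.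
  rewrite pow_O, Rmult_1_r in H0. rewrite pow_1 in H1.
  pose proof (Rabs_triang (c0 + c1 * t + c2 * t ^ 2) (c3 * t ^ 3)).
  pose proof (Rabs_triang (c0 + c1 * t) (c2 * t ^ 2)).
  pose proof (Rabs_triang c0 (c1 * t)).
  assert (0 <= M ^ 3) by (apply pow_le; lra).
  specialize (H0 ltac:(lia)); specialize (H1 ltac:(lia));
  specialize (H2 ltac:(lia)); specialize (H3 ltac:(lia)).
  nra.
Qed.

Section TailBounds.
Variables (m t M : R).
Hypotheses (Hm : 0 <= m) (Ht : 0 <= t <= M) (HM : 1 <= M).

Lemma Atail_bound : Rabs (Atail m t) <= 3 * (m + 1) * M ^ 3.
Proof.
  replace (Atail m t) with (0 + (m + 2) * t + (- (m + 1)) * t ^ 2 + 0 * t ^ 3)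
    by (unfold Atail; ring).
  eapply Rle_trans; [exact (Rabs_cubic_le _ _ _ _ _ _ Ht HM)|].
  rewrite Rabs_R0, Rabs_Ropp, !Rabs_pos_eq by lra.
  assert (0 <= M ^ 3) by (apply pow_le; lra). nra.
Qed.

Lemma Ptail_bound : Rabs (Ptail m t) <= 5 * (m + 1) ^ 2 * M ^ 3.
Proof.
  replace (Ptail m t) with ((m + 1) * (m + 2) + (- 2 * m * (m + 2)) * t
                           + (m * (m + 1)) * t ^ 2 + 0 * t ^ 3)
    by (unfold Ptail; ring).
  eapply Rle_trans; [exact (Rabs_cubic_le _ _ _ _ _ _ Ht HM)|].
  rewrite Rabs_R0, (Rabs_pos_eq ((m + 1) * (m + 2))), (Rabs_pos_eq (m * (m + 1))) by nra.
  rewrite Rabs_left1 by nra.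
  assert (0 <= M ^ 3) by (apply pow_le; lra). nra.
Qed.

Lemma Qtail_bound : Rabs (Qtail m t) <= 18 * (m + 1) ^ 3 * M ^ 3.
Proof.
  replace (Qtail m t)
    with ((m + 1) ^ 2 * (m + 2) + (4 - 4 * m - 9 * m ^ 2 - 3 * m ^ 3) * t
          + (- m + 6 * m ^ 2 + 3 * m ^ 3) * t ^ 2 + (- (m ^ 2 * (m + 1))) * t ^ 3)
    by (unfold Qtail; ring).
  eapply Rle_trans; [exact (Rabs_cubic_le _ _ _ _ _ _ Ht HM)|].
  assert (Rabs ((m + 1) ^ 2 * (m + 2)) <= 2 * (m + 1) ^ 3) by (apply Rabs_le; nra).
  assert (Rabs (4 - 4 * m - 9 * m ^ 2 - 3 * m ^ 3) <= 9 * (m + 1) ^ 3) by (apply Rabs_le; nra).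
  assert (Rabs (- m + 6 * m ^ 2 + 3 * m ^ 3) <= 6 * (m + 1) ^ 3) by (apply Rabs_le; nra).
  assert (Rabs (- (m ^ 2 * (m + 1))) <= (m + 1) ^ 3) by (apply Rabs_le; nra).
  assert (0 <= M ^ 3) by (apply pow_le; lra). nra.
Qed.

End TailBounds.

Section RemainderBounds.
Variables (a b c t u : R).
Hypothesis Hu : 1 <= u.

Lemma linear_tail_bound M : 0 <= t <= M -> 1 <= M ->
  Rabs a <= 3 * u * M ^ 3 -> Rabs b <= 5 * u ^ 2 * M ^ 3 -> Rabs c <= 18 * u ^ 3 * M ^ 3 ->
  Rabs (4 * t * (b - a) - c) <= 50 * u ^ 3 * M ^ 4.
Proof.
  intros Ht HM Ha Hb Hc.
  assert (Hsub : forall x y, Rabs (x - y) <= Rabs x + Rabs y).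
  { intros x y. unfold Rminus. rewrite <- (Rabs_Ropp y). apply Rabs_triang. }
  assert (Htri : Rabs (4 * t * (b - a) - c) <= 4 * t * (Rabs b + Rabs a) + Rabs c).
  { eapply Rle_trans; [apply Hsub|].
    rewrite Rabs_mult, (Rabs_pos_eq (4 * t)) by lra.
    pose proof (Hsub b a). nra. }
  assert (t * (Rabs b + Rabs a) <= M * (5 * u ^ 2 * M ^ 3 + 3 * u * M ^ 3)).
  { apply Rmult_le_compat; [lra | pose proof (Rabs_pos a); pose proof (Rabs_pos b) | |]; lra. }
  assert (u <= u ^ 3) by nra. assert (u ^ 2 <= u ^ 3) by nra.
  assert (M ^ 3 <= M ^ 4) by (apply Rle_pow; [lra | lia]).
  assert (0 <= M ^ 3) by (apply pow_le; lra).
  nra.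
Qed.

Lemma inner_remainder_bound S : 0 <= t <= 1 -> 0 <= S <= 1 ->
  Rabs a <= 3 * u -> Rabs b <= 5 * u ^ 2 -> Rabs c <= 18 * u ^ 3 ->
  Rabs (S * (2 * a + (4 * t * (b - a) - c)) + S ^ 2 * (c * a - t * b ^ 2 - 2 * a ^ 2))
  <= 153 * u ^ 4 * S.
Proof.
  intros Ht HS Ha Hb Hc.
  assert (Hlin := linear_tail_bound 1 Ht (Rle_refl 1)).
  rewrite !pow1, !Rmult_1_r in Hlin. specialize (Hlin Ha Hb Hc).
  assert (Hfirst : Rabs (2 * a + (4 * t * (b - a) - c)) <= 56 * u ^ 4).
  { apply Rabs_le_between in Ha, Hlin. apply Rabs_le_between. nra. }
  assert (Hsecond : Rabs (c * a - t * b ^ 2 - 2 * a ^ 2) <= 97 * u ^ 4).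
  { apply Rabs_le_between in Ha, Hb, Hc. apply Rabs_le_between. nra. }
  eapply Rle_trans; [apply Rabs_triang|].
  rewrite !Rabs_mult, (Rabs_pos_eq S), (Rabs_pos_eq (S ^ 2)) by (apply pow_le || idtac; lra).
  assert (S ^ 2 <= S) by nra.
  assert (0 <= Rabs (2 * a + (4 * t * (b - a) - c))) by apply Rabs_pos.
  assert (0 <= Rabs (c * a - t * b ^ 2 - 2 * a ^ 2)) by apply Rabs_pos.
  nra.
Qed.

Lemma outer_remainder_bound S M : 1 <= t <= M -> 1 <= S ->
  Rabs a <= 3 * u * M ^ 3 -> Rabs b <= 5 * u ^ 2 * M ^ 3 -> Rabs c <= 18 * u ^ 3 * M ^ 3 ->
  Rabs (1 + S * (4 * t * (b - a) - c) + S ^ 2 * (t ^ 2 * (1 - u * (t ^ 2 - 1))))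
  <= 51 * S * u ^ 3 * M ^ 4 + 2 * S ^ 2 * u * M ^ 4.
Proof.
  intros Ht HS Ha Hb Hc.
  assert (HM : 1 <= M) by lra.
  assert (Hlin := linear_tail_bound M ltac:(lra) HM Ha Hb Hc).
  assert (Hquad : Rabs (t ^ 2 * (1 - u * (t ^ 2 - 1))) <= 2 * u * M ^ 4).
  { assert (t ^ 2 <= M ^ 2) by (apply pow_incr; lra).
    assert (0 <= t ^ 2 - 1) by nra.
    assert (M ^ 2 <= M ^ 4) by (apply Rle_pow; [lra | lia]).
    assert (t ^ 2 * (u * (t ^ 2 - 1)) <= M ^ 2 * (u * M ^ 2)).
    { apply Rmult_le_compat; [apply pow2_ge_0 | apply Rmult_le_pos | | apply Rmult_le_compat_l];
        lra. }
    assert (0 <= t ^ 2 * (u * (t ^ 2 - 1)))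
      by (apply Rmult_le_pos; [apply pow2_ge_0 | apply Rmult_le_pos; lra]).
    assert (M ^ 4 <= u * M ^ 4) by (assert (0 <= M ^ 4) by (apply pow_le; lra); nra).
    assert (M ^ 2 * (u * M ^ 2) = u * M ^ 4) by ring.
    replace (t ^ 2 * (1 - u * (t ^ 2 - 1))) with (t ^ 2 - t ^ 2 * (u * (t ^ 2 - 1))) by ring.
    apply Rabs_le_between. lra. }
  eapply Rle_trans; [apply Rabs_triang|].
  eapply Rle_trans; [apply Rplus_le_compat_r, Rabs_triang|].
  rewrite Rabs_R1, (Rabs_mult S), (Rabs_mult (S ^ 2)), (Rabs_pos_eq S), (Rabs_pos_eq (S ^ 2))
    by (apply pow_le || idtac; lra).
  assert (1 <= S * (u ^ 3 * M ^ 4)).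
  { assert (1 <= u ^ 3) by (apply pow_R1_Rle; lra).
    assert (1 <= M ^ 4) by (apply pow_R1_Rle; lra).
    assert (1 <= u ^ 3 * M ^ 4) by nra. nra. }
  assert (S * Rabs (4 * t * (b - a) - c) <= S * (50 * u ^ 3 * M ^ 4))
    by (apply Rmult_le_compat_l; lra).
  assert (S ^ 2 * Rabs (t ^ 2 * (1 - u * (t ^ 2 - 1))) <= S ^ 2 * (2 * u * M ^ 4))
    by (apply Rmult_le_compat_l; [apply pow_le |]; lra).
  nra.
Qed.

End RemainderBounds.

Lemma Asum_outer_lower_bound n t : 1 <= t -> 2 <= (INR n + 1) * (t - 1) ->
  t ^ n * (INR n + 1) * (t - 1) / 2 <= Asum n t * (1 - t) ^ 2.
Proof.
  intros Ht Hw. rewrite Asum_closed. unfold Atail.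
  assert (HS : 1 <= t ^ n) by (apply pow_R1_Rle; lra).
  set (w := (INR n + 1) * (t - 1)) in *.
  replace (1 - t ^ n * (t * (INR n + 2 - (INR n + 1) * t))) with (1 + t ^ n * t * (w - 1))
    by (unfold w; ring).
  replace (t ^ n * (INR n + 1) * (t - 1) / 2) with (t ^ n * w / 2) by (unfold w; field).
  assert (t ^ n * w / 2 <= t ^ n * (w - 1)) by nra.
  assert (t ^ n * (w - 1) <= t ^ n * t * (w - 1)).
  { rewrite (Rmult_assoc (t ^ n) t). apply Rmult_le_compat_l; nra. }
  lra.
Qed.

Lemma kappa_inner_error rho n t : 0 <= t <= rho -> rho < 1 ->
  Rabs (kappa n t - sqrt 2 / (1 - t)) <= 153 * (INR n + 1) ^ 4 * rho ^ n / (1 - rho) ^ 5.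
Proof.
  intros Ht Hrho. unfold kappa.
  pose proof (discriminant_inner_remainder n t ltac:(lra)) as Hrem.
  set (A := Asum n t) in *. set (D := Qsum n t * A - t * Psum n t ^ 2) in *.
  set (R := t ^ n * _ + _) in Hrem.
  assert (HA : 1 <= A) by (apply Asum_ge_1; lra).
  assert (Hs2 : 1 <= sqrt 2) by (rewrite <- sqrt_1; apply sqrt_le_1_alt; lra).
  assert (HR : Rabs R <= 153 * (INR n + 1) ^ 4 * rho ^ n).
  { assert (Hn := pos_INR n). assert (Ht1 : 0 <= t <= 1) by lra.
    pose proof (Atail_bound (INR n) t 1 Hn Ht1 (Rle_refl 1)).
    pose proof (Ptail_bound (INR n) t 1 Hn Ht1 (Rle_refl 1)).
    pose proof (Qtail_bound (INR n) t 1 Hn Ht1 (Rle_refl 1)).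
    rewrite pow1, Rmult_1_r in *.
    assert (HS : t ^ n <= rho ^ n) by (apply pow_incr; lra).
    assert (0 <= (INR n + 1) ^ 4) by (apply pow_le; lra).
    apply Rle_trans with (153 * (INR n + 1) ^ 4 * t ^ n).
    - apply inner_remainder_bound; try assumption; [lra |].
      split; [apply pow_le; lra | rewrite <- (pow1 n); apply pow_incr; lra].
    - apply Rmult_le_compat_l; [lra | exact HS]. }
  eapply Rle_trans; [apply Rabs_sqrt_div_sub_le; [lra | apply Rdiv_lt_0_compat; lra]|].
  replace (D - (sqrt 2 / (1 - t)) ^ 2 * A ^ 2) with (R / (1 - t) ^ 6).
  2:{ rewrite <- Hrem, <- (pow2_sqrt 2) at 1 by lra. field. lra. }
  rewrite Rabs_div, (Rabs_pos_eq ((1 - t) ^ 6)) by (apply pow_nonzero || apply pow_le; lra).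
  replace (Rabs R / (1 - t) ^ 6 / (sqrt 2 / (1 - t) * A ^ 2))
    with (Rabs R / ((1 - t) ^ 5 * (sqrt 2 * A ^ 2))) by (field; lra).
  apply Rdiv_le_compat; split; [apply Rabs_pos | exact HR | apply pow_lt; lra |].
  rewrite <- Rmult_1_r at 1.
  apply Rmult_le_compat; [apply pow_le; lra | lra | apply pow_incr; lra | nra].
Qed.

Lemma kappa_outer_error tau M n t : 1 < tau <= t -> t <= M -> 2 <= (INR n + 1) * (tau - 1) ->
  Rabs (kappa n t - 1 / (t - 1))
  <= 4 * M ^ 4 / (tau - 1) ^ 3 * (51 * (INR n + 1) * (/ tau) ^ n + 2 / (INR n + 1)).
Proof.
  intros Ht HtM Hn. unfold kappa.
  assert (Hu : 1 <= INR n + 1) by (pose proof (pos_INR n); lra).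
  assert (Hw : 2 <= (INR n + 1) * (t - 1)).
  { apply Rle_trans with ((INR n + 1) * (tau - 1)); [lra | apply Rmult_le_compat_l; lra]. }
  pose proof (Asum_outer_lower_bound n t ltac:(lra) Hw) as HL.
  pose proof (discriminant_outer_remainder n t ltac:(lra)) as Hrem.
  set (A := Asum n t) in *. set (D := Qsum n t * A - t * Psum n t ^ 2) in *.
  set (S := t ^ n) in *. set (u := INR n + 1) in *. set (X := 1 + S * _ + _) in Hrem.
  assert (HA : 1 <= A) by (apply Asum_ge_1; lra).
  assert (HS : tau ^ n <= S) by (apply pow_incr; lra).
  assert (HS1 : 1 <= S) by (apply pow_R1_Rle; lra).
  assert (HX : Rabs X <= 51 * S * u ^ 3 * M ^ 4 + 2 * S ^ 2 * u * M ^ 4).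
  { assert (Hn0 := pos_INR n). assert (Ht0 : 0 <= t <= M) by lra. assert (HM : 1 <= M) by lra.
    apply outer_remainder_bound;
      [lra | lra | lra | apply Atail_bound | apply Ptail_bound | apply Qtail_bound]; lra. }
  assert (HSu : 0 < S * u * (t - 1) / 2) by (apply Rmult_lt_0_compat; [|lra]; nra).
  eapply Rle_trans; [apply Rabs_sqrt_div_sub_le; [lra | apply Rdiv_lt_0_compat; lra]|].
  replace (D - (1 / (t - 1)) ^ 2 * A ^ 2) with (X / (t - 1) ^ 6).
  2:{ rewrite <- Hrem. field. lra. }
  rewrite Rabs_div, (Rabs_pos_eq ((t - 1) ^ 6)) by (apply pow_nonzero || apply pow_le; lra).
  replace (Rabs X / (t - 1) ^ 6 / (1 / (t - 1) * A ^ 2))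
    with (Rabs X / ((t - 1) * (A * (1 - t) ^ 2) ^ 2)) by (field; lra).
  apply Rle_trans with ((51 * S * u ^ 3 * M ^ 4 + 2 * S ^ 2 * u * M ^ 4)
                        / ((t - 1) * (S * u * (t - 1) / 2) ^ 2)).
  { apply Rdiv_le_compat; split; [apply Rabs_pos | exact HX | |].
    - apply Rmult_lt_0_compat; [lra | apply pow_lt, HSu].
    - apply Rmult_le_compat_l; [lra | apply pow_incr; lra]. }
  replace ((51 * S * u ^ 3 * M ^ 4 + 2 * S ^ 2 * u * M ^ 4)
           / ((t - 1) * (S * u * (t - 1) / 2) ^ 2))
    with (4 * M ^ 4 / (t - 1) ^ 3 * (51 * u * / S + 2 / u)) by (field; lra).
  assert (HiS : / S <= (/ tau) ^ n).
  { rewrite pow_inv. apply Rinv_le_contravar; [apply pow_lt; lra | exact HS]. }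
  assert (0 < / S) by (apply Rinv_0_lt_compat; lra).
  assert (0 < 2 / u) by (apply Rdiv_lt_0_compat; lra).
  assert (0 <= 4 * M ^ 4) by (apply Rmult_le_pos; [lra | apply pow_le; lra]).
  apply Rmult_le_compat; [apply Rdiv_le_0_compat; [lra | apply pow_lt; lra] | nra | | nra].
  apply Rdiv_le_compat; split; [lra | lra | apply pow_lt; lra | apply pow_incr; lra].
Qed.

(** * Convergence *)

Lemma is_lim_seq_inv_succ : is_lim_seq (fun n => / (INR n + 1)) 0.
Proof.
  replace (Finite 0) with (Rbar_inv p_infty) by reflexivity.
  apply is_lim_seq_inv; [|discriminate].
  eapply is_lim_seq_plus; [apply is_lim_seq_INR | apply is_lim_seq_const | reflexivity].
Qed.

Lemma is_lim_seq_poly_geom_pos k q : 0 < q < 1 ->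
  is_lim_seq (fun n => (INR n + 1) ^ k * q ^ n) 0.
Proof.
  intros Hq. set (a n := (INR n + 1) ^ k * q ^ n).
  assert (Hpos : forall n, 0 < a n).
  { intros n. apply Rmult_lt_0_compat; apply pow_lt; [pose proof (pos_INR n) |]; lra. }
  assert (Hratio : forall n, Rabs (a (S n) / a n) = (1 + / (INR n + 1)) ^ k * q).
  { intros n. pose proof (pos_INR n).
    assert (E : a (S n) = (1 + / (INR n + 1)) ^ k * q * a n).
    { unfold a. rewrite S_INR.
      replace (INR n + 1 + 1) with ((1 + / (INR n + 1)) * (INR n + 1)) by (field; lra).
      rewrite Rpow_mult_distr. simpl. ring. }
    specialize (Hpos n).
    assert (0 < / (INR n + 1)) by (apply Rinv_0_lt_compat; lra).
    rewrite E. unfold Rdiv. rewrite Rmult_assoc, Rinv_r, Rmult_1_r by lra.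
    apply Rabs_pos_eq, Rmult_le_pos; [apply pow_le |]; lra. }
  apply is_lim_seq_abs_0, ex_series_lim_0, (ex_series_DAlembert a q);
    [lra | intros n; specialize (Hpos n); lra |].
  apply is_lim_seq_ext with (fun n => (1 + / (INR n + 1)) ^ k * q);
    [intros n; now rewrite Hratio|].
  replace (Finite q) with (Finite ((1 + 0) ^ k * q)) by (now rewrite Rplus_0_r, pow1, Rmult_1_l).
  apply (is_lim_seq_continuous (fun y => (1 + y) ^ k * q)); [reg | apply is_lim_seq_inv_succ].
Qed.

Lemma is_lim_seq_poly_geom k q : 0 <= q < 1 ->
  is_lim_seq (fun n => (INR n + 1) ^ k * q ^ n) 0.
Proof.
  intros Hq.
  apply (is_lim_seq_le_le (fun _ => 0) _ (fun n => (INR n + 1) ^ k * ((1 + q) / 2) ^ n)).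
  - intros n. assert (0 < (INR n + 1) ^ k) by (apply pow_lt; pose proof (pos_INR n); lra).
    split; [apply Rmult_le_pos; [lra | apply pow_le; lra] |].
    apply Rmult_le_compat_l; [lra | apply pow_incr; lra].
  - apply is_lim_seq_const.
  - apply is_lim_seq_poly_geom_pos. lra.
Qed.

Lemma unif_cv_on_of_bound f g (U : R -> Prop) (E : nat -> R) : is_lim_seq E 0 ->
  (exists N, forall n x, (N <= n)%nat -> U x -> Rabs (f n x - g x) <= E n) ->
  unif_cv_on f g U.
Proof.
  intros HE [N HN] eps Heps. apply is_lim_seq_Reals in HE.
  destruct (HE eps Heps) as [N' HN']. exists (max N N'). intros n x Hn Hx.
  specialize (HN' n ltac:(lia)). unfold R_dist in HN'. rewrite Rminus_0_r in HN'.
  eapply Rle_lt_trans; [apply HN; [lia | exact Hx] | eapply Rle_lt_trans; [apply Rle_abs | exact HN']].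
Qed.

Lemma unif_cv_on_subset f g (U V : R -> Prop) :
  (forall x, V x -> U x) -> unif_cv_on f g U -> unif_cv_on f g V.
Proof.
  intros HVU Hcv eps Heps. destruct (Hcv eps Heps) as [N HN].
  exists N. intros n x Hn Hx. apply HN; auto.
Qed.

Lemma Un_cv_of_loc_unif_cv_on f g (U : R -> Prop) x :
  loc_unif_cv_on f g U -> U x -> Un_cv (fun n => f n x) (g x).
Proof.
  intros Hcv Hx eps Heps.
  destruct (Hcv x x (fun y Hy => ltac:(replace y with x by lra; exact Hx)) eps Heps) as [N HN].
  exists N. intros n Hn. apply HN; [exact Hn | lra].
Qed.

Lemma Klim_inner x : Rabs x < 1 -> Klim x = sqrt 2 / (1 - x ^ 2).
Proof. intros Hx. unfold Klim. destruct (Rlt_dec (Rabs x) 1); [reflexivity | contradiction]. Qed.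

Lemma Klim_outer x : 1 < Rabs x -> Klim x = 1 / (x ^ 2 - 1).
Proof. intros Hx. unfold Klim. destruct (Rlt_dec (Rabs x) 1); [lra | reflexivity]. Qed.

Lemma calK_unif_inner rho : 0 <= rho < 1 -> unif_cv_on calK Klim (fun x => x ^ 2 <= rho).
Proof.
  intros Hrho.
  apply unif_cv_on_of_bound with (fun n => 153 * (INR n + 1) ^ 4 * rho ^ n / (1 - rho) ^ 5).
  - apply is_lim_seq_ext with (fun n => 153 / (1 - rho) ^ 5 * ((INR n + 1) ^ 4 * rho ^ n)).
    { intros n. field. lra. }
    replace (Finite 0) with (Rbar_mult (153 / (1 - rho) ^ 5) 0) by (simpl; f_equal; ring).
    apply is_lim_seq_scal_l, is_lim_seq_poly_geom, Hrho.
  - exists 0%nat. intros n x _ Hx.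
    assert (Hx1 : Rabs x < 1).
    { rewrite <- (Rabs_pos_eq 1) by lra. apply Rsqr_lt_abs_0. unfold Rsqr. nra. }
    rewrite Klim_inner, calK_kappa by exact Hx1.
    apply kappa_inner_error; [split; [apply pow2_ge_0 | exact Hx] | lra].
Qed.

Lemma calK_unif_outer tau M : 1 < tau ->
  unif_cv_on calK Klim (fun x => tau <= x ^ 2 <= M).
Proof.
  intros Htau.
  apply unif_cv_on_of_bound with (fun n => 4 * M ^ 4 / (tau - 1) ^ 3
    * (51 * (INR n + 1) * (/ tau) ^ n + 2 / (INR n + 1))).
  - apply is_lim_seq_ext with (fun n => 4 * M ^ 4 / (tau - 1) ^ 3
      * (51 * ((INR n + 1) ^ 1 * (/ tau) ^ n) + 2 * / (INR n + 1))).
    { intros n. rewrite pow_1. unfold Rdiv. ring. }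
    replace (Finite 0) with (Finite (4 * M ^ 4 / (tau - 1) ^ 3 * (51 * 0 + 2 * 0)))
      by (f_equal; ring).
    apply is_lim_seq_mult'; [apply is_lim_seq_const|].
    apply is_lim_seq_plus'; apply is_lim_seq_mult'; try apply is_lim_seq_const.
    + apply is_lim_seq_poly_geom. split; [left; apply Rinv_0_lt_compat; lra|].
      rewrite <- Rinv_1. apply Rinv_lt_contravar; lra.
    + apply is_lim_seq_inv_succ.
  - destruct (INR_unbounded (2 / (tau - 1))) as [N HN]. exists N. intros n x Hn Hx.
    assert (HnN : INR N <= INR n) by (apply le_INR; exact Hn).
    assert (Hx1 : 1 < Rabs x).
    { rewrite <- (Rabs_pos_eq 1) by lra. apply Rsqr_lt_abs_0. unfold Rsqr. nra. }
    rewrite Klim_outer, calK_kappa by exact Hx1.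
    apply kappa_outer_error; [lra | lra |].
    apply Rle_trans with ((INR N + 1) * (tau - 1)); [|apply Rmult_le_compat_r; lra].
    replace 2 with (2 / (tau - 1) * (tau - 1)) at 1 by (field; lra).
    apply Rmult_le_compat_r; lra.
Qed.

Lemma calK_loc_unif_inner : loc_unif_cv_on calK Klim (fun x => Rabs x < 1).
Proof.
  intros a b Hab. destruct (Rle_lt_dec a b) as [Hle|Hlt].
  2:{ intros eps _. exists 0%nat. intros n x _ Hx. lra. }
  apply unif_cv_on_subset with (fun x => x ^ 2 <= Rmax (a ^ 2) (b ^ 2)).
  - intros x Hx. destruct (Rle_lt_dec 0 x).
    + apply Rle_trans with (b ^ 2); [apply pow_incr | apply Rmax_r]; lra.
    + apply Rle_trans with (a ^ 2); [nra | apply Rmax_l].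
  - apply calK_unif_inner.
    split; [apply Rle_trans with (a ^ 2); [apply pow2_ge_0 | apply Rmax_l]|].
    apply Rmax_lub_lt; rewrite <- pow2_abs; apply pow_lt_1_compat; try lia;
      split; try apply Rabs_pos; apply Hab; lra.
Qed.

Lemma calK_loc_unif_outer : loc_unif_cv_on calK Klim (fun x => Rabs x > 1).
Proof.
  intros a b Hab. destruct (Rle_lt_dec a b) as [Hle|Hlt].
  2:{ intros eps _. exists 0%nat. intros n x _ Hx. lra. }
  assert (Ha := Hab a ltac:(lra)). assert (Hb := Hab b ltac:(lra)).
  destruct (Rlt_le_dec 1 a) as [Ha1|Ha1].
  - apply unif_cv_on_subset with (fun x => a ^ 2 <= x ^ 2 <= b ^ 2); [intros x Hx; split; nra|].
    apply calK_unif_outer. nra.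
  - assert (Hb1 : b < -1).
    { destruct (Rle_lt_dec 0 b).
      - assert (H0 := Hab 0 ltac:(split; [|lra]; unfold Rabs in Ha; destruct Rcase_abs in Ha; lra)).
        rewrite Rabs_R0 in H0. lra.
      - unfold Rabs in Hb; destruct Rcase_abs in Hb; lra. }
    apply unif_cv_on_subset with (fun x => b ^ 2 <= x ^ 2 <= a ^ 2); [intros x Hx; split; nra|].
    apply calK_unif_outer. nra.
Qed.

Theorem theorem3 :
  (forall x, Rabs x <> 1 -> Un_cv (fun n => calK n x) (Klim x)) /\
  loc_unif_cv_on calK Klim (fun x => Rabs x < 1) /\
  loc_unif_cv_on calK Klim (fun x => Rabs x > 1) /\
  (forall n : nat,
     calK n 1 = / 3 * sqrt (INR n * (INR n + 3) / 2) /\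
     calK n (-1) = / 3 * sqrt (INR n * (INR n + 3) / 2)).
Proof.
  split; [|split; [exact calK_loc_unif_inner | split; [exact calK_loc_unif_outer|]]].
  - intros x Hx. destruct (Rlt_or_le (Rabs x) 1) as [Hlt|Hge].
    + exact (Un_cv_of_loc_unif_cv_on _ _ _ x calK_loc_unif_inner Hlt).
    + apply (Un_cv_of_loc_unif_cv_on _ _ _ x calK_loc_unif_outer). lra.
  - intros n. rewrite !calK_kappa. replace ((-1) ^ 2) with 1 by ring. rewrite pow1.
    split; apply kappa_at_1.
Qed.
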